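(* For every integer $a\geq 2$, $$\sigma(2a-1,2)=-a\,2^{2a-1}\lambda(2a+1)+\frac{2^{2a-1}(2a+1)}{3}\lambda(2)\lambda(2a-1)+\sum_{j=1}^{a-2}j\,2^{2j}\lambda(2j+1)\zeta(2a-2j),$$ where an empty sum equals $0$.
   Context: For integers $t\geq 1$ and $n\geq 1$ let $S_n^{(t)}=\sum_{k=1}^{n}\frac{1}{(2k-1)^t}$, and for integers $s\geq 2$, $t\geq 1$ let $\sigma(s,t)=\sum_{n\geq 1}\frac{S_n^{(t)}}{n^s}$. For real $s>1$, $\lambda(s)=\sum_{n\geq 1}\frac{1}{(2n-1)^s}=(1-2^{-s})\zeta(s)$, and $\zeta$ is the Riemann zeta function. *)

From Stdlib Require Import Reals.
From Coquelicot Require Import Coquelicot.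
Open Scope R_scope.

Definition zeta_R (s : nat) : R := Series (fun k : nat => / (INR (k + 1)) ^ s).

Definition lambda_odd (s : nat) : R := Series (fun k : nat => / (INR (2 * k + 1)) ^ s).

(* S_n^{(t)} = sum_{k=1}^n 1/(2k-1)^t ; sum over k=0..n-1 of 1/(2k+1)^t. *)
Definition Sodd (t n : nat) : R :=
  match n with
  | O => 0
  | Datatypes.S m => sum_n (fun k : nat => / (INR (2 * k + 1)) ^ t) m
  end.

Definition sigma_odd (s t : nat) : R := Series (fun k : nat => Sodd t (k + 1) / (INR (k + 1)) ^ s).

From Stdlib Require Import Reals Lra Lia.
From Coquelicot Require Import Coquelicot.
Open Scope R_scope.

(* With m = 2k+1 and N = n+1, consider the nonnegative double series of
   4m / (N^(2a-2) (m^2 - 4N^2)^2).  Partial fractions in m give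
   4m / (m^2 - 4N^2)^2 = (1/(2N)) (1/(m - 2N)^2 - 1/(m + 2N)^2); over odd m the two shifted
   copies of lambda(2) differ by 2 S_N^(2), so summing over k first and then over n gives
   sigma(2a-1, 2).  Partial fractions in N instead write each term as a combination of the
   1/N^(2j), of 1/(2N - m)^2 + 1/(2N + m)^2 and of 1/(2N - m) - 1/(2N + m), whose sums over n
   are zeta values, 2 lambda(2) - 1/m^2 and 1/m (telescoping); summing over n first and then
   over k gives the right-hand side.  Tonelli's theorem for nonnegative double series
   identifies the two orders of summation. *)

Lemma is_series_Rext (a b : nat -> R) (l : R) :
  (forall n, a n = b n) -> is_series a l -> is_series b l.
Proof. exact (is_series_ext a b l). Qed.

Lemma is_series_Rplus (a b : nat -> R) (la lb : R) :
  is_series a la -> is_series b lb -> is_series (fun n => a n + b n) (la + lb).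
Proof. exact (is_series_plus a b la lb). Qed.

Lemma is_series_Rminus (a b : nat -> R) (la lb : R) :
  is_series a la -> is_series b lb -> is_series (fun n => a n - b n) (la - lb).
Proof. exact (is_series_minus a b la lb). Qed.

Lemma is_series_Rscal_l (c : R) (a : nat -> R) (la : R) :
  is_series a la -> is_series (fun n => c * a n) (c * la).
Proof. exact (is_series_scal_l c a la). Qed.

Lemma is_series_R0 : is_series (fun _ : nat => 0) 0.
Proof.
  apply (is_lim_seq_ext (fun _ => 0) (sum_n (fun _ => 0)) 0); [| apply is_lim_seq_const].
  intros n. rewrite sum_n_const. ring.
Qed.

Lemma is_series_Rincr_1 (a : nat -> R) (l : R) :
  is_series a l -> is_series (fun k => a (S k)) (l - a 0%nat).
Proof.
  intros H. apply is_series_incr_1.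
  match goal with |- is_series _ ?x => replace x with l by (unfold plus; simpl; ring) end.
  exact H.
Qed.

Lemma is_series_Rdecr_1 (a : nat -> R) (l : R) :
  is_series (fun k => a (S k)) l -> is_series a (l + a 0%nat).
Proof.
  intros H. apply is_series_decr_1.
  match goal with |- is_series _ ?x => replace x with l by (unfold plus, opp; simpl; ring) end.
  exact H.
Qed.

Lemma is_series_sum_n (f : nat -> nat -> R) (F : nat -> R) (K : nat) :
  (forall i, (i <= K)%nat -> is_series (f i) (F i)) ->
  is_series (fun n => sum_n (fun i => f i n) K) (sum_n F K).
Proof.
  induction K as [|K IH]; intros H.
  - rewrite sum_O. apply (is_series_Rext (f 0%nat)); [intros; now rewrite sum_O | auto].
  - rewrite sum_Sn. apply (is_series_Rext (fun n => sum_n (fun i => f i n) K + f (S K) n)).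
    { intros; now rewrite sum_Sn. }
    apply is_series_Rplus; auto.
Qed.

Lemma is_series_le (u v : nat -> R) (U V : R) :
  (forall n, u n <= v n) -> is_series u U -> is_series v V -> U <= V.
Proof.
  intros H Hu Hv.
  exact (is_lim_seq_le _ _ U V (fun N => sum_n_m_le u v 0 N H) Hu Hv).
Qed.

Lemma series_le_of_sum_n_le (u : nat -> R) (U M : R) :
  is_series u U -> (forall N, sum_n u N <= M) -> U <= M.
Proof.
  intros Hu H. exact (is_lim_seq_le _ (fun _ => M) U M H Hu (is_lim_seq_const M)).
Qed.

Lemma sum_n_le_series (u : nat -> R) (U : R) (N : nat) :
  (forall n, 0 <= u n) -> is_series u U -> sum_n u N <= U.
Proof.
  intros Hpos Hu. apply is_series_Reals in Hu. rewrite sum_n_Reals.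
  apply growing_ineq; auto. intros n; simpl; specialize (Hpos (S n)); lra.
Qed.

Lemma series_nonneg (u : nat -> R) (U : R) : (forall n, 0 <= u n) -> is_series u U -> 0 <= U.
Proof. intros Hpos Hu. exact (is_series_le _ u 0 U Hpos is_series_R0 Hu). Qed.

Section NonnegDoubleSeries.

Variables (a : nat -> nat -> R) (row col : nat -> R).
Hypothesis a_nonneg : forall m n, 0 <= a m n.
Hypothesis is_series_row : forall m, is_series (a m) (row m).
Hypothesis is_series_col : forall n, is_series (fun m => a m n) (col n).

Lemma sum_n_col_le (B : R) (N : nat) : is_series row B -> sum_n col N <= B.
Proof.
  intros HB.
  apply (is_series_le (fun m => sum_n (a m) N) row); auto.
  - intros m. exact (sum_n_le_series (a m) (row m) N (a_nonneg m) (is_series_row m)).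
  - apply (is_series_sum_n (fun n m => a m n)). auto.
Qed.

Lemma is_series_swap (B : R) : is_series row B -> is_series col B.
Proof.
  intros HB.
  assert (col_nonneg : forall n, 0 <= col n)
    by (intros n; exact (series_nonneg _ _ (fun m => a_nonneg m n) (is_series_col n))).
  destruct (ex_finite_lim_seq_incr (sum_n col) B) as [C HC].
  - intros n. rewrite sum_Sn. change plus with Rplus; simpl. specialize (col_nonneg (S n)); lra.
  - intros N. exact (sum_n_col_le B N HB).
  assert (C <= B) by exact (series_le_of_sum_n_le col C B HC (fun N => sum_n_col_le B N HB)).
  assert (B <= C).
  { apply (series_le_of_sum_n_le row B C HB). intros N.
    apply (is_series_le (fun n => sum_n (fun m => a m n) N) col); auto.
    - intros n. apply sum_n_le_series; auto.
    - apply (is_series_sum_n a). auto. }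
  replace B with C by lra. exact HC.
Qed.

End NonnegDoubleSeries.

Lemma is_series_telescoping (v : nat -> R) :
  is_lim_seq v 0 -> is_series (fun n => v n - v (S n)) (v 0%nat).
Proof.
  intros H.
  apply (is_lim_seq_ext (fun n => v 0%nat - v (S n)) (sum_n (fun n => v n - v (S n))) (v 0%nat)).
  { intros n; induction n as [|n IH]; [now rewrite sum_O | rewrite sum_Sn, <- IH].
    unfold plus; simpl; ring. }
  replace (Finite (v 0%nat)) with (Rbar_minus (v 0%nat) 0) by (simpl; f_equal; ring).
  apply is_lim_seq_minus'; [apply is_lim_seq_const | now apply is_lim_seq_incr_1 in H].
Qed.

Lemma is_series_telescoping_n (v : nat -> R) (K : nat) :
  is_lim_seq v 0 -> is_series (fun n => v n - v (n + S K)%nat) (sum_n v K).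
Proof.
  intros H. induction K as [|K IH].
  - rewrite sum_O. apply (is_series_Rext (fun n => v n - v (S n))).
    { intros n. do 3 f_equal. lia. }
    now apply is_series_telescoping.
  - rewrite sum_Sn.
    apply (is_series_Rext (fun n => (v n - v (n + S K)%nat) + (v (n + S K)%nat - v (S (n + S K))))).
    { intros n. replace (n + S (S K))%nat with (S (n + S K)) by lia. ring. }
    apply is_series_Rplus; [exact IH |].
    apply (is_series_telescoping (fun n => v (n + S K)%nat)).
    now apply is_lim_seq_incr_n.
Qed.

Ltac push_INR := repeat rewrite ?S_INR, ?plus_INR, ?mult_INR, ?INR_0.

Lemma INR_succ_pos (k : nat) : 0 < INR (k + 1).
Proof. apply lt_0_INR; lia. Qed.

Lemma is_lim_seq_inv_affine (c : R) : is_lim_seq (fun n => / (2 * INR n + c)) 0.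
Proof.
  replace (Finite 0) with (Rbar_inv p_infty) by reflexivity.
  apply is_lim_seq_inv; [| discriminate].
  eapply is_lim_seq_plus.
  - apply is_lim_seq_scal_l, is_lim_seq_INR.
  - apply is_lim_seq_const.
  - unfold is_Rbar_plus; simpl.
    destruct (Rle_dec 0 2) as [r|r]; [| lra].
    destruct (Rle_lt_or_eq_dec 0 2 r); [reflexivity | lra].
Qed.

(* Comparison with the telescoping series of [2/(k+1) - 2/(k+2)]. *)
Lemma ex_series_inv_sq : ex_series (fun k => / INR (k + 1) ^ 2).
Proof.
  set (v := fun k : nat => 4 * / (2 * INR k + 2)).
  apply (@ex_series_le R_AbsRing R_CompleteNormedModule) with (fun k => v k - v (S k)).
  - intros n. change (Rabs (/ INR (n + 1) ^ 2) <= v n - v (S n)).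
    unfold v. rewrite S_INR, plus_INR. change (INR 1) with 1. pose proof (pos_INR n).
    rewrite Rabs_pos_eq by (apply Rlt_le, Rinv_0_lt_compat; nra).
    replace (4 * / (2 * INR n + 2) - 4 * / (2 * (INR n + 1) + 2))
      with (/ ((INR n + 1) * (INR n + 2) / 2)) by (field; lra).
    apply Rinv_le_contravar; nra.
  - exists (v 0%nat). apply is_series_telescoping.
    replace (Finite 0) with (Rbar_mult 4 0) by (simpl; f_equal; ring).
    apply is_lim_seq_scal_l, is_lim_seq_inv_affine.
Qed.

Lemma ex_series_zeta (s : nat) : (2 <= s)%nat -> ex_series (fun k => / INR (k + 1) ^ s).
Proof.
  intros Hs. apply (@ex_series_le R_AbsRing R_CompleteNormedModule) with (fun k => / INR (k + 1) ^ 2).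
  2: exact ex_series_inv_sq.
  intros n. change (Rabs (/ INR (n + 1) ^ s) <= / INR (n + 1) ^ 2). pose proof (INR_succ_pos n).
  rewrite Rabs_pos_eq by (apply Rlt_le, Rinv_0_lt_compat, pow_lt; lra).
  apply Rinv_le_contravar; [apply pow_lt; lra |].
  apply Rle_pow; auto. rewrite plus_INR; simpl. pose proof (pos_INR n); lra.
Qed.

Lemma ex_series_lambda (s : nat) : (2 <= s)%nat -> ex_series (fun k => / INR (2 * k + 1) ^ s).
Proof.
  intros Hs. apply (@ex_series_le R_AbsRing R_CompleteNormedModule) with (fun k => / INR (k + 1) ^ s).
  2: now apply ex_series_zeta.
  intros n. change (Rabs (/ INR (2 * n + 1) ^ s) <= / INR (n + 1) ^ s). pose proof (INR_succ_pos n).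
  rewrite Rabs_pos_eq by (apply Rlt_le, Rinv_0_lt_compat, pow_lt, lt_0_INR; lia).
  apply Rinv_le_contravar; [apply pow_lt; lra |].
  apply pow_incr. split; [lra | apply le_INR; lia].
Qed.

Lemma is_series_zeta (s : nat) : (2 <= s)%nat -> is_series (fun k => / INR (k + 1) ^ s) (zeta_R s).
Proof. intros; apply Series_correct, ex_series_zeta; auto. Qed.

Lemma is_series_lambda (s : nat) :
  (2 <= s)%nat -> is_series (fun k => / INR (2 * k + 1) ^ s) (lambda_odd s).
Proof. intros; apply Series_correct, ex_series_lambda; auto. Qed.

(* Split the partial sums of zeta into odd and even terms. *)
Lemma lambda_odd_zeta (s : nat) : (2 <= s)%nat -> lambda_odd s = (1 - / 2 ^ s) * zeta_R s.
Proof.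
  intros Hs.
  set (z := fun k : nat => / INR (k + 1) ^ s).
  set (h := fun k : nat => / INR (2 * k + 1) ^ s).
  assert (split_odd_even : forall N, sum_n z (2 * N + 1) = sum_n (fun k => h k + / 2 ^ s * z k) N).
  { induction N as [|N IH].
    - change (2 * 0 + 1)%nat with 1%nat. rewrite sum_Sn, !sum_O. unfold z, h, plus; simpl.
      rewrite pow1, Rinv_1. replace (1 + 1) with 2 by ring. ring.
    - replace (2 * S N + 1)%nat with (S (S (2 * N + 1))) by lia.
      assert (odd_term : z (S (2 * N + 1)) = h (S N))
        by (unfold z, h; do 3 f_equal; lia).
      assert (even_term : z (S (S (2 * N + 1))) = / 2 ^ s * z (S N)).
      { unfold z. rewrite <- Rinv_mult, <- Rpow_mult_distr. do 2 f_equal. push_INR. ring. }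
      rewrite !sum_Sn, IH, odd_term, even_term. unfold plus; simpl. ring. }
  assert (lim_z : is_lim_seq (fun N => sum_n z (2 * N + 1)) (zeta_R s)).
  { apply (is_lim_seq_subseq (sum_n z) (zeta_R s) (fun N => 2 * N + 1)%nat).
    - apply eventually_subseq. intros; lia.
    - now apply is_series_zeta. }
  assert (lim_hz : is_lim_seq (fun N => sum_n z (2 * N + 1)) (lambda_odd s + / 2 ^ s * zeta_R s)).
  { apply (is_lim_seq_ext (sum_n (fun k => h k + / 2 ^ s * z k)) _ (lambda_odd s + / 2 ^ s * zeta_R s)).
    { intros; now rewrite split_odd_even. }
    apply is_series_Rplus; [| apply is_series_Rscal_l]; [apply is_series_lambda | apply is_series_zeta]; exact Hs. }
  apply is_lim_seq_unique in lim_z. apply is_lim_seq_unique in lim_hz.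
  rewrite lim_z in lim_hz. injection lim_hz. lra.
Qed.

Lemma Sodd_S (t n : nat) : Sodd t (S n) = Sodd t n + / INR (2 * n + 1) ^ t.
Proof. destruct n; unfold Sodd; [now rewrite sum_O, Rplus_0_l | now rewrite sum_Sn]. Qed.

Lemma odd_sub_even_neq0 (k n : nat) : 2 * INR k + 1 - 2 * INR n <> 0.
Proof.
  intros H. assert (E : INR (2 * k + 1) = INR (2 * n)) by (push_INR; lra).
  apply INR_eq in E. lia.
Qed.

(* The odd numbers [1 - 2n, 3 - 2n, ...]: their squares are those of [1, 3, ...] and of
   [1, 3, ..., 2n - 1]. *)
Lemma is_series_inv_sq_odd_from (n : nat) :
  is_series (fun k => / (2 * INR k + 1 - 2 * INR n) ^ 2) (lambda_odd 2 + Sodd 2 n).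
Proof.
  induction n as [|n IH].
  - rewrite Rplus_0_r. apply (is_series_Rext (fun k => / INR (2 * k + 1) ^ 2)).
    + intros k. push_INR. do 2 f_equal. ring.
    + now apply is_series_lambda.
  - rewrite Sodd_S, <- Rplus_assoc.
    replace (/ INR (2 * n + 1) ^ 2) with (/ (2 * INR 0 + 1 - 2 * INR (S n)) ^ 2)
      by (f_equal; push_INR; ring).
    apply (is_series_Rdecr_1 (fun k => / (2 * INR k + 1 - 2 * INR (S n)) ^ 2)).
    apply (is_series_Rext (fun k => / (2 * INR k + 1 - 2 * INR n) ^ 2)); auto.
    intros k. f_equal. push_INR. ring.
Qed.

Lemma is_series_lambda_tail (t n : nat) :
  (2 <= t)%nat -> is_series (fun k => / INR (2 * (k + n) + 1) ^ t) (lambda_odd t - Sodd t n).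
Proof.
  intros Ht. induction n as [|n IH].
  - rewrite Rminus_0_r. apply (is_series_Rext (fun k => / INR (2 * k + 1) ^ t)).
    + intros k. do 4 f_equal. lia.
    + now apply is_series_lambda.
  - rewrite Sodd_S.
    apply (is_series_Rext (fun k => / INR (2 * (S k + n) + 1) ^ t)); [intros k; do 4 f_equal; lia |].
    replace (lambda_odd t - (Sodd t n + / INR (2 * n + 1) ^ t))
      with (lambda_odd t - Sodd t n - / INR (2 * (0 + n) + 1) ^ t) by (simpl; ring).
    exact (is_series_Rincr_1 (fun k => / INR (2 * (k + n) + 1) ^ t) _ IH).
Qed.

(* The terms are [1/(1 - 2k), 1/(3 - 2k), ..., 1/(2k + 1)], which cancel in pairs. *)
Lemma sum_n_inv_odd_centered (k : nat) :
  sum_n (fun i => / (2 * INR i + 1 - 2 * INR k)) (2 * k) = / INR (2 * k + 1).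
Proof.
  induction k as [|k IH].
  - rewrite sum_O. push_INR. f_equal. ring.
  - replace (2 * S k)%nat with (S (S (2 * k))) by lia.
    unfold sum_n. rewrite sum_Sn_m by lia. rewrite <- sum_n_m_S. change (sum_n_m ?f 0 ?N) with (sum_n f N).
    rewrite (sum_n_ext _ (fun i => / (2 * INR i + 1 - 2 * INR k))) by (intros i; f_equal; push_INR; ring).
    rewrite sum_Sn, IH. push_INR. unfold plus; simpl. pose proof (pos_INR k).
    field. repeat split; lra.
Qed.

Lemma is_series_inv_odd_diff (k : nat) :
  is_series (fun n => / (2 * INR (n + 1) - INR (2 * k + 1)) - / (2 * INR (n + 1) + INR (2 * k + 1)))
    (/ INR (2 * k + 1)).
Proof.
  set (v := fun n : nat => / (2 * INR n + 1 - 2 * INR k)).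
  apply (is_series_Rext (fun n => v n - v (n + S (2 * k))%nat)).
  { intros n. unfold v. f_equal; f_equal; push_INR; ring. }
  rewrite <- sum_n_inv_odd_centered. apply is_series_telescoping_n.
  apply (is_lim_seq_ext (fun n => / (2 * INR n + (1 - 2 * INR k))) v 0).
  - intros n; unfold v; f_equal; ring.
  - apply is_lim_seq_inv_affine.
Qed.

Lemma is_series_inv_odd_sum_sq (k : nat) :
  is_series (fun n => / (2 * INR (n + 1) - INR (2 * k + 1)) ^ 2 + / (2 * INR (n + 1) + INR (2 * k + 1)) ^ 2)
    (2 * lambda_odd 2 - / INR (2 * k + 1) ^ 2).
Proof.
  replace (2 * lambda_odd 2 - / INR (2 * k + 1) ^ 2)
    with ((lambda_odd 2 + Sodd 2 k) + (lambda_odd 2 - Sodd 2 (k + 1)))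
    by (rewrite Nat.add_1_r, Sodd_S; ring).
  apply is_series_Rplus.
  - apply (is_series_Rext (fun n => / (2 * INR n + 1 - 2 * INR k) ^ 2)).
    + intros n. do 2 f_equal. push_INR. ring.
    + apply is_series_inv_sq_odd_from.
  - apply (is_series_Rext (fun n => / INR (2 * (n + (k + 1)) + 1) ^ 2)).
    + intros n. do 2 f_equal. push_INR. ring.
    + apply is_series_lambda_tail. lia.
Qed.

Section PartialFractions.

Variables x y : R.
Hypotheses (x_neq0 : x <> 0) (y_neq0 : y <> 0) (sub_neq0 : 2 * y - x <> 0) (add_neq0 : 2 * y + x <> 0).

Let D := x ^ 2 - 4 * y ^ 2.

Lemma sq_sub_four_sq_neq0 : D <> 0.
Proof.
  unfold D. replace (x ^ 2 - 4 * y ^ 2) with (- ((2 * y - x) * (2 * y + x))) by ring.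
  apply Ropp_neq_0_compat, Rmult_integral_contrapositive. tauto.
Qed.

Lemma partial_fraction_odd :
  4 * x / D ^ 2 = / (2 * y) * (/ (x - 2 * y) ^ 2 - / (x + 2 * y) ^ 2).
Proof.
  pose proof sq_sub_four_sq_neq0. unfold D in *. field.
  repeat split; auto; intros E; [apply add_neq0 | apply sub_neq0]; lra.
Qed.

(* The factor [(y^2)^i / (y^2)^(b+1)] is [1/y^(2(b+1-i))], kept as a quotient so that the
   induction on [b] multiplies every term by [1/y^2]; the term [i = 0] vanishes. *)
Definition pole_term (b i : nat) : R :=
  INR i * 2 ^ (2 * i) * / x ^ (2 * i + 1) * ((y ^ 2) ^ i / (y ^ 2) ^ S b).

Let A := / (2 * y - x) ^ 2 + / (2 * y + x) ^ 2.
Let B := / (2 * y - x) - / (2 * y + x).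

Lemma partial_fraction_even (b : nat) :
  4 * x / (y ^ (2 * b) * D ^ 2) =
  sum_n (pole_term b) b
  + 2 ^ (2 * b) * / x ^ (2 * b + 1) * A
  + (1 - 2 * INR (S b)) * 2 ^ (2 * b) * / x ^ (2 * b + 2) * B.
Proof.
  pose proof sq_sub_four_sq_neq0 as HD. induction b as [|b IH].
  - rewrite sum_O. unfold pole_term, D, A, B in *. change (2 * 0)%nat with 0%nat.
    rewrite !pow_O, !Nat.add_0_l. push_INR. field. repeat split; auto.
  - assert (y2_neq0 : y ^ 2 <> 0) by (apply pow_nonzero; auto).
    assert (pole_S : forall i, pole_term (S b) i = pole_term b i * / y ^ 2).
    { intros i. unfold pole_term. change ((y ^ 2) ^ S (S b)) with (y ^ 2 * (y ^ 2) ^ S b).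
      field. repeat split; repeat apply pow_nonzero; auto. }
    rewrite sum_Sn.
    replace (sum_n (pole_term (S b)) b) with (sum_n (pole_term b) b * / y ^ 2)
      by (rewrite (sum_n_ext _ _ _ pole_S); symmetry; exact (sum_n_mult_r (K := R_Ring) _ _ _)).
    replace (4 * x / (y ^ (2 * S b) * D ^ 2)) with (4 * x / (y ^ (2 * b) * D ^ 2) * / y ^ 2).
    2:{ replace (2 * S b)%nat with (2 * b + 2)%nat by lia. rewrite pow_add. field.
        repeat split; auto. apply pow_nonzero; auto. }
    rewrite IH. unfold pole_term, A, B, D in *.
    set (X := x ^ (2 * b)). set (Q := 2 ^ (2 * b)).
    replace (x ^ (2 * b + 1)) with (X * x) by (unfold X; rewrite pow_add; ring).
    replace (x ^ (2 * b + 2)) with (X * x ^ 2) by (unfold X; rewrite pow_add; ring).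
    replace (x ^ (2 * S b + 1)) with (X * x ^ 3) by (unfold X; rewrite <- pow_add; f_equal; lia).
    replace (x ^ (2 * S b + 2)) with (X * x ^ 4) by (unfold X; rewrite <- pow_add; f_equal; lia).
    replace (2 ^ (2 * S b)) with (Q * 4)
      by (unfold Q; replace (2 * S b)%nat with (2 * b + 2)%nat by lia; rewrite pow_add; ring).
    replace ((y ^ 2) ^ S (S b)) with ((y ^ 2) ^ S b * y ^ 2) by (simpl; ring).
    assert (X_neq0 : X <> 0) by (apply pow_nonzero; auto).
    assert ((y ^ 2) ^ S b <> 0) by (apply pow_nonzero; auto).
    rewrite !S_INR. set (sum_n _ b). change plus with Rplus. field. repeat split; auto.
Qed.

End PartialFractions.

Definition sigma_kernel (p k n : nat) : R :=
  4 * INR (2 * k + 1) / (INR (n + 1) ^ p * (INR (2 * k + 1) ^ 2 - 4 * INR (n + 1) ^ 2) ^ 2).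

Lemma double_sub_odd_neq0 (k n : nat) : 2 * INR (n + 1) - INR (2 * k + 1) <> 0.
Proof.
  intros E. apply (odd_sub_even_neq0 k (n + 1)). revert E. push_INR. lra.
Qed.

Lemma double_add_odd_neq0 (k n : nat) : 2 * INR (n + 1) + INR (2 * k + 1) <> 0.
Proof. pose proof (INR_succ_pos n). pose proof (pos_INR (2 * k + 1)). lra. Qed.

Lemma odd_sq_sub_double_sq_neq0 (k n : nat) : INR (2 * k + 1) ^ 2 - 4 * INR (n + 1) ^ 2 <> 0.
Proof. apply sq_sub_four_sq_neq0; [apply double_sub_odd_neq0 | apply double_add_odd_neq0]. Qed.

Lemma sigma_kernel_nonneg (p k n : nat) : 0 <= sigma_kernel p k n.
Proof.
  pose proof (INR_succ_pos n) as HN. pose proof (odd_sq_sub_double_sq_neq0 k n) as HD.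
  assert (Hm : 0 < INR (2 * k + 1)) by (apply lt_0_INR; lia).
  unfold sigma_kernel. apply Rlt_le, Rdiv_lt_0_compat; [lra |].
  apply Rmult_lt_0_compat; [apply pow_lt; lra |].
  rewrite <- Rsqr_pow2. now apply Rsqr_pos_lt.
Qed.

Lemma is_series_sigma_kernel_k (p n : nat) :
  is_series (fun k => sigma_kernel p k n) (Sodd 2 (n + 1) / INR (n + 1) ^ (p + 1)).
Proof.
  set (N := INR (n + 1)). pose proof (INR_succ_pos n) as HN. fold N in HN.
  apply (is_series_Rext (fun k => / (2 * N ^ (p + 1)) *
     (/ (2 * INR k + 1 - 2 * INR (n + 1)) ^ 2 - / INR (2 * (k + (n + 1)) + 1) ^ 2))).
  - intros k. unfold sigma_kernel. fold N.
    replace (4 * INR (2 * k + 1) / (N ^ p * (INR (2 * k + 1) ^ 2 - 4 * N ^ 2) ^ 2))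
      with (/ N ^ p * (4 * INR (2 * k + 1) / (INR (2 * k + 1) ^ 2 - 4 * N ^ 2) ^ 2)).
    2:{ field. split; [apply odd_sq_sub_double_sq_neq0 | apply pow_nonzero; lra]. }
    rewrite partial_fraction_odd.
    + replace (INR (2 * (k + (n + 1)) + 1)) with (INR (2 * k + 1) + 2 * N) by (unfold N; push_INR; ring).
      replace (2 * INR k + 1) with (INR (2 * k + 1)) by (push_INR; ring).
      rewrite pow_add, pow_1, !Rinv_mult. ring.
    + apply not_0_INR. lia.
    + lra.
    + apply double_sub_odd_neq0.
    + apply double_add_odd_neq0.
  - replace (Sodd 2 (n + 1) / N ^ (p + 1)) with
      (/ (2 * N ^ (p + 1)) * ((lambda_odd 2 + Sodd 2 (n + 1)) - (lambda_odd 2 - Sodd 2 (n + 1))))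
      by (field; apply pow_nonzero; lra).
    apply is_series_Rscal_l, is_series_Rminus.
    + apply is_series_inv_sq_odd_from.
    + apply is_series_lambda_tail. lia.
Qed.

Definition kernel_row_sum (b k : nat) : R :=
  sum_n (fun i => INR i * 2 ^ (2 * i) * / INR (2 * k + 1) ^ (2 * i + 1) * zeta_R (2 * S b - 2 * i)) b
  + 2 ^ (2 * b) * / INR (2 * k + 1) ^ (2 * b + 1) * (2 * lambda_odd 2 - / INR (2 * k + 1) ^ 2)
  + (1 - 2 * INR (S b)) * 2 ^ (2 * b) * / INR (2 * k + 1) ^ (2 * b + 2) * / INR (2 * k + 1).

Lemma is_series_sigma_kernel_n (b k : nat) :
  is_series (fun n => sigma_kernel (2 * b) k n) (kernel_row_sum b k).
Proof.
  set (m := INR (2 * k + 1)).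
  assert (Hm : 0 < m) by (unfold m; apply lt_0_INR; lia).
  apply (is_series_Rext (fun n => sum_n (pole_term m (INR (n + 1)) b) b
    + 2 ^ (2 * b) * / m ^ (2 * b + 1) * (/ (2 * INR (n + 1) - m) ^ 2 + / (2 * INR (n + 1) + m) ^ 2)
    + (1 - 2 * INR (S b)) * 2 ^ (2 * b) * / m ^ (2 * b + 2) * (/ (2 * INR (n + 1) - m) - / (2 * INR (n + 1) + m)))).
  { intros n. pose proof (INR_succ_pos n). unfold sigma_kernel. fold m.
    symmetry. apply partial_fraction_even.
    - lra.
    - lra.
    - apply double_sub_odd_neq0.
    - apply double_add_odd_neq0. }
  unfold kernel_row_sum. fold m.
  apply is_series_Rplus; [apply is_series_Rplus |].
  - apply (is_series_sum_n (fun i n => pole_term m (INR (n + 1)) b i)).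
    intros i Hi.
    apply (is_series_Rext (fun n => INR i * 2 ^ (2 * i) * / m ^ (2 * i + 1) * / INR (n + 1) ^ (2 * S b - 2 * i))).
    + intros n. unfold pole_term. pose proof (INR_succ_pos n). f_equal.
      rewrite <- !pow_mult.
      replace (2 * S b)%nat with (2 * i + (2 * S b - 2 * i))%nat at 2 by lia.
      rewrite pow_add. field. split; apply pow_nonzero; lra.
    + apply is_series_Rscal_l, is_series_zeta. lia.
  - apply is_series_Rscal_l, is_series_inv_odd_sum_sq.
  - apply is_series_Rscal_l, is_series_inv_odd_diff.
Qed.

(* The guard discards [i = 0], where [lambda_odd 1] is the junk value of a divergent series. *)
Definition kernel_total (b : nat) : R :=
  sum_n (fun i => if (1 <=? i)%nat then
      INR i * 2 ^ (2 * i) * lambda_odd (2 * i + 1) * zeta_R (2 * S b - 2 * i) else 0) b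
  + 2 ^ (2 * b) * (2 * lambda_odd 2 * lambda_odd (2 * b + 1) - lambda_odd (2 * b + 3))
  + (1 - 2 * INR (S b)) * 2 ^ (2 * b) * lambda_odd (2 * b + 3).

Lemma is_series_kernel_row_sum (b : nat) : (1 <= b)%nat -> is_series (kernel_row_sum b) (kernel_total b).
Proof.
  intros Hb. unfold kernel_total.
  apply (is_series_Rext (fun k =>
    sum_n (fun i => INR i * 2 ^ (2 * i) * / INR (2 * k + 1) ^ (2 * i + 1) * zeta_R (2 * S b - 2 * i)) b
    + 2 ^ (2 * b) * (2 * lambda_odd 2 * / INR (2 * k + 1) ^ (2 * b + 1) - / INR (2 * k + 1) ^ (2 * b + 3))
    + (1 - 2 * INR (S b)) * 2 ^ (2 * b) * / INR (2 * k + 1) ^ (2 * b + 3))).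
  { intros k. unfold kernel_row_sum.
    assert (Hm : 0 < INR (2 * k + 1)) by (apply lt_0_INR; lia).
    replace (2 * b + 3)%nat with (2 * b + 1 + 2)%nat by lia.
    replace (2 * b + 2)%nat with (2 * b + 1 + 1)%nat by lia.
    rewrite !pow_add. field. split; [lra | apply pow_nonzero; lra]. }
  apply is_series_Rplus; [apply is_series_Rplus |].
  - apply (is_series_sum_n (fun i k => INR i * 2 ^ (2 * i) * / INR (2 * k + 1) ^ (2 * i + 1) * zeta_R (2 * S b - 2 * i))).
    intros [|i] _.
    + apply (is_series_Rext (fun _ => 0)); [intros k; simpl; ring | apply is_series_R0].
    + apply (is_series_Rext (fun k => INR (S i) * 2 ^ (2 * S i) * zeta_R (2 * S b - 2 * S i) * / INR (2 * k + 1) ^ (2 * S i + 1)));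
        [intros k; ring |].
      replace (INR (S i) * 2 ^ (2 * S i) * lambda_odd (2 * S i + 1) * zeta_R (2 * S b - 2 * S i))
        with (INR (S i) * 2 ^ (2 * S i) * zeta_R (2 * S b - 2 * S i) * lambda_odd (2 * S i + 1)) by ring.
      apply is_series_Rscal_l, is_series_lambda. lia.
  - apply is_series_Rscal_l, is_series_Rminus; [apply is_series_Rscal_l |]; apply is_series_lambda; lia.
  - apply is_series_Rscal_l, is_series_lambda. lia.
Qed.

Lemma is_series_sigma_odd_kernel (b : nat) : (1 <= b)%nat ->
  is_series (fun n => Sodd 2 (n + 1) / INR (n + 1) ^ (2 * b + 1)) (kernel_total b).
Proof.
  intros Hb.
  apply (is_series_swap (fun k n => sigma_kernel (2 * b) k n) (kernel_row_sum b)).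
  - intros; apply sigma_kernel_nonneg.
  - intros; apply is_series_sigma_kernel_n.
  - intros; apply is_series_sigma_kernel_k.
  - now apply is_series_kernel_row_sum.
Qed.

Theorem mainTheorem7 (a : nat) (ha : (2 <= a)%nat) :
  sigma_odd (2 * a - 1)%nat 2 =
    - INR a * 2 ^ (2 * a - 1) * lambda_odd (2 * a + 1)%nat
    + 2 ^ (2 * a - 1) * INR (2 * a + 1) / 3 * lambda_odd 2 * lambda_odd (2 * a - 1)%nat
    + sum_n (fun i : nat =>
        if (1 <=? i)%nat then
          INR i * 2 ^ (2 * i) * lambda_odd (2 * i + 1)%nat * zeta_R (2 * a - 2 * i)%nat
        else 0) (a - 2)%nat.
Proof.
  destruct a as [|[|c]]; try lia.
  set (b := S c).
  replace (2 * S b - 1)%nat with (2 * b + 1)%nat by lia.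
  unfold sigma_odd. rewrite (is_series_unique _ _ (is_series_sigma_odd_kernel b ltac:(lia))).
  assert (zeta_2 : zeta_R 2 = 4 / 3 * lambda_odd 2)
    by (rewrite (lambda_odd_zeta 2) by lia; field).
  unfold kernel_total. change (sum_n ?f b) with (sum_n f (S c)). rewrite sum_Sn.
  replace (S b - 2)%nat with c by lia.
  replace (2 * S b - 2 * S c)%nat with 2%nat by lia.
  replace (2 * S b + 1)%nat with (2 * b + 3)%nat by lia.
  replace (2 ^ (2 * b + 1)) with (2 ^ (2 * b) * 2) by (rewrite pow_add; ring).
  change (S c) with b. rewrite zeta_2. replace (1 <=? b)%nat with true by reflexivity.
  replace (INR (2 * b + 3)) with (2 * INR b + 3) by (push_INR; ring).
  rewrite S_INR. set (sum_n _ c). change plus with Rplus. field.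
Qed.
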